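(* Fix all system parameters except the RIS reflection vector $\boldsymbol{\omega}\in\mathbb{C}^{N_\mathrm{r}}$, and write $\mathbf{J}_{\boldsymbol{\gamma}}(\boldsymbol{\omega})$ for the Fisher information matrix defined in the context. Then $\mathbf{J}_{\boldsymbol{\gamma}}(\boldsymbol{\omega})$ depends on $\boldsymbol{\omega}$ only through the three scalars $\mathbf{B}^\mathrm{H}\boldsymbol{\omega}=\big[\mathbf{b}_\mathrm{r}^\mathrm{T}(\boldsymbol{\phi}_\mathrm{ru})\boldsymbol{\omega},\ \tfrac{\partial \mathbf{b}_\mathrm{r}^\mathrm{T}(\boldsymbol{\phi}_\mathrm{ru})}{\partial\phi_\mathrm{ru}^{\mathrm{az}}}\boldsymbol{\omega},\ \tfrac{\partial \mathbf{b}_\mathrm{r}^\mathrm{T}(\boldsymbol{\phi}_\mathrm{ru})}{\partial\phi_\mathrm{ru}^{\mathrm{el}}}\boldsymbol{\omega}\big]^\mathrm{T}$. In particular, it does not depend on the component $\boldsymbol{\Pi}_\mathbf{B}^\perp\boldsymbol{\omega}$: if $\boldsymbol{\Pi}_\mathbf{B}\boldsymbol{\omega}_1=\boldsymbol{\Pi}_\mathbf{B}\boldsymbol{\omega}_2$, then $\mathbf{J}_{\boldsymbol{\gamma}}(\boldsymbol{\omega}_1)=\mathbf{J}_{\boldsymbol{\gamma}}(\boldsymbol{\omega}_2)$, and consequently $\mathbf{J}_{\boldsymbol{\eta}}(\boldsymbol{\omega}_1)=\mathbf{J}_{\boldsymbol{\eta}}(\boldsymbol{\omega}_2)$.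
   Context: Setting: a LEO satellite with a uniform planar array of $N_\mathrm{s}$ antennas, whose element coordinates in its body frame are the columns of $\mathbf{P}_\mathrm{s}\in\mathbb{R}^{3\times N_\mathrm{s}}$. An RIS with $N_\mathrm{r}$ elements, whose coordinates in its body frame are the columns of $\mathbf{P}_\mathrm{r}\in\mathbb{R}^{3\times N_\mathrm{r}}$. A single-antenna UE. For an angle pair $\boldsymbol{\theta}=[\theta^{\mathrm{az}},\theta^{\mathrm{el}}]^\mathrm{T}$, let $\mathbf{t}(\boldsymbol{\theta})=[\cos\theta^{\mathrm{az}}\cos\theta^{\mathrm{el}},\ \sin\theta^{\mathrm{az}}\cos\theta^{\mathrm{el}},\ \sin\theta^{\mathrm{el}}]^\mathrm{T}$. The steering vectors are $\mathbf{a}_\mathrm{s}(\boldsymbol{\theta})=\exp(-j\tfrac{2\pi f_c}{c}\mathbf{P}_\mathrm{s}^\mathrm{T}\mathbf{t}(\boldsymbol{\theta}))$ and $\mathbf{a}_\mathrm{r}(\boldsymbol{\phi})=\exp(-j\tfrac{2\pi f_c}{c}\mathbf{P}_\mathrm{r}^\mathrm{T}\mathbf{t}(\boldsymbol{\phi}))$, with the exponential applied entrywise, where $f_c$ is the carrier frequency and $c$ is the speed of light. The RIS reflection vector is $\boldsymbol{\omega}\in\mathbb{C}^{N_\mathrm{r}}$. The channel at time $t$ and frequency $f$ is the row vector $\mathbf{h}^\mathrm{T}(t,f)=\alpha_\mathrm{su}e^{j2\pi(t\nu_\mathrm{su}-f\tau_\mathrm{su})}\mathbf{a}_\mathrm{s}^\mathrm{T}(\boldsymbol{\theta}_\mathrm{su})+\alpha_\mathrm{sru}e^{j2\pi(t\nu_\mathrm{sr}-f\tau_\mathrm{sru})}\mathbf{a}_\mathrm{r}^\mathrm{T}(\boldsymbol{\phi}_\mathrm{ru})\,\mathrm{diag}(\boldsymbol{\omega})\,\mathbf{a}_\mathrm{r}(\boldsymbol{\phi}_\mathrm{sr})\mathbf{a}_\mathrm{s}^\mathrm{T}(\boldsymbol{\theta}_\mathrm{sr}).$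 Here $\alpha_\mathrm{su},\alpha_\mathrm{sru}\in\mathbb{C}$ are gains, $\tau_\mathrm{su},\tau_\mathrm{sru}$ are delays, and $\nu_\mathrm{su},\nu_\mathrm{sr}$ are Doppler shifts. The angle pairs are $\boldsymbol{\theta}_\mathrm{su},\boldsymbol{\theta}_\mathrm{sr}$ (angles of departure at the satellite), $\boldsymbol{\phi}_\mathrm{sr}$ (angle of arrival at the RIS) and $\boldsymbol{\phi}_\mathrm{ru}$ (angle of departure from the RIS toward the UE). The quantities $\boldsymbol{\theta}_\mathrm{sr},\boldsymbol{\phi}_\mathrm{sr},\nu_\mathrm{sr}$ are known. Observations: $M$ transmissions with period $T$, and $N$ subcarriers with spacing $\Delta f$. The noise-free received sample is $\mu_m[n]=\sqrt{P}\,\mathbf{h}^\mathrm{T}(mT,n\Delta f)\mathbf{f}_m s_m[n]$, where $P>0$ is the power, $\mathbf{f}_m\in\mathbb{C}^{N_\mathrm{s}}$ are known precoders, and $s_m[n]$ are known pilot symbols. The noise is i.i.d. $\mathcal{CN}(0,\sigma^2)$. Channel parameter vector: $\boldsymbol{\gamma}=[\tau_\mathrm{su},\theta_\mathrm{su}^{\mathrm{az}},\theta_\mathrm{su}^{\mathrm{el}},\tau_\mathrm{sru},\phi_\mathrm{ru}^{\mathrm{az}},\phi_\mathrm{ru}^{\mathrm{el}},\nu_\mathrm{su},\Re\alpha_\mathrm{su},\Im\alpha_\mathrm{su},\Re\alpha_\mathrm{sru},\Im\alpha_\mathrm{sru}]^\mathrm{T}\in\mathbb{R}^{11}.$ Its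 Fisher information matrix is $\mathbf{J}_{\boldsymbol{\gamma}}=\frac{2}{\sigma^2}\sum_{m=1}^M\sum_{n=1}^N\Re\Big\{\frac{\partial\mu_m[n]}{\partial\boldsymbol{\gamma}}\Big(\frac{\partial\mu_m[n]}{\partial\boldsymbol{\gamma}}\Big)^\mathrm{H}\Big\}.$ Location parameter vector: $\boldsymbol{\eta}=[\mathbf{p}_\mathrm{u}^\mathrm{T},\Delta,\Re\alpha_\mathrm{su},\Im\alpha_\mathrm{su},\Re\alpha_\mathrm{sru},\Im\alpha_\mathrm{sru}]^\mathrm{T}\in\mathbb{R}^8$, where $\mathbf{p}_\mathrm{u}$ is the UE position and $\Delta$ is a clock offset. The vector $\boldsymbol{\gamma}$ is a smooth function of $\boldsymbol{\eta}$ given the known satellite position $\mathbf{p}_\mathrm{s}$, satellite velocity $\boldsymbol{v}$, RIS position $\mathbf{p}_\mathrm{r}$, and the known orientations. Specifically: - $\tau_\mathrm{su}=\|\mathbf{p}_\mathrm{s}-\mathbf{p}_\mathrm{u}\|/c+\Delta$; - $\tau_\mathrm{sru}=(\|\mathbf{p}_\mathrm{s}-\mathbf{p}_\mathrm{r}\|+\|\mathbf{p}_\mathrm{r}-\mathbf{p}_\mathrm{u}\|)/c+\Delta$; - $\nu_\mathrm{su}=\boldsymbol{v}^\mathrm{T}(\mathbf{p}_\mathrm{u}-\mathbf{p}_\mathrm{s})/(\lambda\|\mathbf{p}_\mathrm{u}-\mathbf{p}_\mathrm{s}\|)$, with $\lambda$ the wavelength; - $\boldsymbol{\theta}_\mathrm{su}$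 and $\boldsymbol{\phi}_\mathrm{ru}$ are the directions of $\mathbf{p}_\mathrm{u}$ as seen from the satellite and from the RIS in their respective body frames. With $\mathbf{T}=\partial\boldsymbol{\gamma}^\mathrm{T}/\partial\boldsymbol{\eta}\in\mathbb{R}^{8\times 11}$, which does not depend on $\boldsymbol{\omega}$, define $\mathbf{J}_{\boldsymbol{\eta}}=\mathbf{T}\mathbf{J}_{\boldsymbol{\gamma}}\mathbf{T}^\mathrm{T}$ and $\mathrm{PEB}=\sqrt{\mathrm{tr}([\mathbf{J}_{\boldsymbol{\eta}}^{-1}]_{1:3,1:3})}$. Further notation. Let $\mathbf{b}_\mathrm{r}(\boldsymbol{\phi})=\mathbf{a}_\mathrm{r}(\boldsymbol{\phi})\odot\mathbf{a}_\mathrm{r}(\boldsymbol{\phi}_\mathrm{sr})$, where $\odot$ is the Hadamard product. Let $\mathbf{B}=\big[\mathbf{b}_\mathrm{r}^*(\boldsymbol{\phi}_\mathrm{ru}),\ \tfrac{\partial\mathbf{b}_\mathrm{r}^*(\boldsymbol{\phi}_\mathrm{ru})}{\partial\phi_\mathrm{ru}^{\mathrm{az}}},\ \tfrac{\partial\mathbf{b}_\mathrm{r}^*(\boldsymbol{\phi}_\mathrm{ru})}{\partial\phi_\mathrm{ru}^{\mathrm{el}}}\big]\in\mathbb{C}^{N_\mathrm{r}\times 3}$, assumed to have full column rank. Let $\boldsymbol{\Pi}_\mathbf{B}=\mathbf{B}(\mathbf{B}^\mathrm{H}\mathbf{B})^{-1}\mathbf{B}^\mathrm{H}$ and $\boldsymbol{\Pi}_\mathbf{B}^\perp=\mathbf{I}-\boldsymbol{\Pi}_\mathbf{B}$.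 *)

From HB Require Import structures.
From mathcomp Require Import all_boot all_order all_algebra.
From mathcomp Require Import all_classical all_reals.
From mathcomp Require Import topology normedtype derive sequences exp trigo.
From mathcomp Require Import complex.
Set Implicit Arguments. Unset Strict Implicit. Unset Printing Implicit Defensive.
Import Order.TTheory GRing.Theory Num.Theory.
Import numFieldNormedType.Exports.
Local Open Scope ring_scope.

Definition expj {R : realType} (x : R) : R[i] := Complex (cos x) (sin x).

Definition cderiv {R : realType} (g : R -> R[i]) (x : R) : R[i] :=
  Complex (derive1 (fun y => @complex.Re R (g y)) x) (derive1 (fun y => @complex.Im R (g y)) x).

Definition hadj {R : realType} m n (A : 'M[R[i]]_(m, n)) : 'M[R[i]]_(n, m) :=
  (map_mx conjc A)^T.

Definition updc {R : realType} n (v : 'cV[R]_n) (i : 'I_n) (x : R) : 'cV[R]_n :=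
  \col_j (if j == i then x else v j 0).

Definition vnorm {R : realType} (v : 'cV[R]_3) : R :=
  Num.sqrt (\sum_i (v i 0) ^+ 2).
Definition vdot {R : realType} (v w : 'cV[R]_3) : R := (v^T *m w) 0 0.

Definition atan2 {R : realType} (y x : R) : R :=
  if 0 < x then atan (y / x)
  else if x < 0 then (if 0 <= y then atan (y / x) + pi else atan (y / x) - pi)
  else if 0 < y then pi / 2 else if y < 0 then - (pi / 2) else 0.

Definition tvec {R : realType} (az el : R) : 'cV[R]_3 :=
  \col_(i < 3) nth 0 [:: cos az * cos el; sin az * cos el; sin el] i.

(* angle pair (az, el) of a vector d, so that t(az, el) = d / |d| *)
Definition dir_az {R : realType} (d : 'cV[R]_3) : R := atan2 (d 1 0) (d 0 0).
Definition dir_el {R : realType} (d : 'cV[R]_3) : R := asin (d 2 0 / vnorm d).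

Record sysParams (R : realType) := SysParams {
  fc : R;
  cl : R;
  Ns : nat;
  Nr : nat;
  Ps : 'M[R]_(3, Ns);           (* satellite element coordinates (body frame) *)
  Pr : 'M[R]_(3, Nr);           (* RIS element coordinates (body frame) *)
  th_sr_az : R; th_sr_el : R;
  ph_sr_az : R; ph_sr_el : R;
  nu_sr : R;
  Mtx : nat;
  Nsc : nat;
  Tper : R;
  Df : R;
  Pow : R;
  sigma2 : R;
  prec : nat -> 'cV[R[i]]_Ns;
  pilot : nat -> nat -> R[i];
  p_s : 'cV[R]_3;
  vel : 'cV[R]_3;
  p_r : 'cV[R]_3;
  Qs : 'M[R]_3;                 (* satellite orientation: columns = body axes *)
  Qr : 'M[R]_3                  (* RIS orientation: columns = body axes *)
}.

Section Model.
Variable R : realType.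
Variable S : sysParams R.

Definition steer K (Pm : 'M[R]_(3, K)) (az el : R) : 'cV[R[i]]_K :=
  \col_k expj (- (2 * pi * fc S / cl S) * (Pm^T *m tvec az el) k 0).

Definition a_s (az el : R) := steer (Ps S) az el.
Definition a_r (az el : R) := steer (Pr S) az el.

Definition b_r (az el : R) : 'cV[R[i]]_(Nr S) :=
  \col_k (a_r az el k 0 * a_r (ph_sr_az S) (ph_sr_el S) k 0).

(* channel parameter vector gamma in R^11, indices:
   0 tau_su, 1 th_su^az, 2 th_su^el, 3 tau_sru, 4 ph_ru^az, 5 ph_ru^el,
   6 nu_su, 7 Re a_su, 8 Im a_su, 9 Re a_sru, 10 Im a_sru *)
Definition gam (g : 'cV[R]_11) (k : nat) : R := g (@inord 10 k) 0.

Definition mu (g : 'cV[R]_11) (w : 'cV[R[i]]_(Nr S)) (m n : nat) : R[i] :=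
  let t := m%:R * Tper S in
  let f := n%:R * Df S in
  let alpha_su : R[i] := Complex (gam g 7) (gam g 8) in
  let alpha_sru : R[i] := Complex (gam g 9) (gam g 10) in
  let hf : R[i] :=
    alpha_su * expj (2 * pi * (t * gam g 6 - f * gam g 0))
      * ((a_s (gam g 1) (gam g 2))^T *m prec S m) 0 0
    + alpha_sru * expj (2 * pi * (t * nu_sr S - f * gam g 3))
      * ((a_r (gam g 4) (gam g 5))^T *m diag_mx w^T
           *m a_r (ph_sr_az S) (ph_sr_el S)) 0 0
      * ((a_s (th_sr_az S) (th_sr_el S))^T *m prec S m) 0 0 in
  (Num.sqrt (Pow S))%:C%C * hf * pilot S m n.

Definition dmu (g : 'cV[R]_11) (w : 'cV[R[i]]_(Nr S)) (m n : nat) (k : 'I_11)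
  : R[i] := cderiv (fun x => mu (updc g k x) w m n) (g k 0).

Definition Jgam (g : 'cV[R]_11) (w : 'cV[R[i]]_(Nr S)) : 'M[R]_11 :=
  \matrix_(k, l) (2 / sigma2 S *
    \sum_(1 <= m < (Mtx S).+1) \sum_(1 <= n < (Nsc S).+1)
      @complex.Re R (dmu g w m n k * conjc (dmu g w m n l))).

(* location parameter eta in R^8, indices:
   0..2 p_u, 3 Delta, 4 Re a_su, 5 Im a_su, 6 Re a_sru, 7 Im a_sru *)
Definition eta_pu (e : 'cV[R]_8) : 'cV[R]_3 := \col_(i < 3) e (@inord 7 i) 0.

Definition lambda : R := cl S / fc S.

Definition gamma_of_eta (e : 'cV[R]_8) : 'cV[R]_11 :=
  let pu := eta_pu e in
  let Delta := e (@inord 7 3) 0 in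
  let dsu := (Qs S)^T *m (pu - p_s S) in
  let dru := (Qr S)^T *m (pu - p_r S) in
  \col_(i < 11) nth 0
    [:: vnorm (p_s S - pu) / cl S + Delta;
        dir_az dsu; dir_el dsu;
        (vnorm (p_s S - p_r S) + vnorm (p_r S - pu)) / cl S + Delta;
        dir_az dru; dir_el dru;
        vdot (vel S) (pu - p_s S) / (lambda * vnorm (pu - p_s S));
        e (@inord 7 4) 0; e (@inord 7 5) 0; e (@inord 7 6) 0; e (@inord 7 7) 0]
    i.

Definition Tmat (e : 'cV[R]_8) : 'M[R]_(8, 11) :=
  \matrix_(i, k) derive1 (fun x => gamma_of_eta (updc e i x) k 0) (e i 0).

Definition Jeta (e : 'cV[R]_8) (w : 'cV[R[i]]_(Nr S)) : 'M[R]_8 :=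
  Tmat e *m Jgam (gamma_of_eta e) w *m (Tmat e)^T.

Definition Bmat (g : 'cV[R]_11) : 'M[R[i]]_(Nr S, 3) :=
  let az := gam g 4 in let el := gam g 5 in
  \matrix_(k, j) conjc (nth 0
    [:: b_r az el k 0;
        cderiv (fun x => b_r x el k 0) az;
        cderiv (fun x => b_r az x k 0) el] j).

Definition PiB (g : 'cV[R]_11) : 'M[R[i]]_(Nr S) :=
  Bmat g *m invmx (hadj (Bmat g) *m Bmat g) *m hadj (Bmat g).

End Model.

Arguments mu {R} S g w m n.
Arguments dmu {R} S g w m n k.
Arguments Jgam {R} S g w.
Arguments gamma_of_eta {R} S e.
Arguments Tmat {R} S e.
Arguments Jeta {R} S e w.
Arguments Bmat {R} S g.
Arguments PiB {R} S g.
Arguments b_r {R} S az el.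

(* The RIS path enters the received sample as c(gamma) * b_r(phi_ru)^T omega,
   where the factor c(gamma) does not involve the RIS angles phi_ru.  Hence
   mu(omega1) - mu(omega2) = c(gamma) * b_r(phi_ru)^T (omega1 - omega2): its
   derivative in every parameter other than phi_ru vanishes as soon as
   b_r^T (omega1 - omega2) = 0, and its derivative in phi_ru^az (resp. phi_ru^el)
   is c(gamma) times the corresponding derivative of b_r^T (omega1 - omega2).
   These three scalars are the entries of B^H (omega1 - omega2), so B^H omega1 =
   B^H omega2 makes all partial derivatives of mu, hence J_gamma and
   J_eta = T J_gamma T^T, coincide.  Finally Pi_B omega1 = Pi_B omega2 implies
   B^H omega1 = B^H omega2 because B^H Pi_B = B^H, B^H B being invertible when B
   has full column rank. *)

From HB Require Import structures.
From mathcomp Require Import all_boot all_order all_algebra.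
From mathcomp Require Import all_classical all_reals.
From mathcomp Require Import topology normedtype derive sequences exp trigo.
From mathcomp Require Import complex.
From mathcomp Require Import ring.
Set Implicit Arguments. Unset Strict Implicit. Unset Printing Implicit Defensive.
Import Order.TTheory GRing.Theory Num.Theory.
Import numFieldNormedType.Exports.
Local Open Scope ring_scope.

Section ComplexDerivative.
Variable R : realType.
Implicit Types (f h : R -> R[i]) (x : R).

Lemma ReD (a b : R[i]) : complex.Re (a + b) = complex.Re a + complex.Re b.
Proof. by case: a; case: b. Qed.

Lemma ImD (a b : R[i]) : complex.Im (a + b) = complex.Im a + complex.Im b.
Proof. by case: a; case: b. Qed.

Lemma ReM (a b : R[i]) :
  complex.Re (a * b) = complex.Re a * complex.Re b - complex.Im a * complex.Im b.
Proof. by case: a; case: b. Qed.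

Lemma ImM (a b : R[i]) :
  complex.Im (a * b) = complex.Re a * complex.Im b + complex.Im a * complex.Re b.
Proof. by case: a; case: b. Qed.

(* [u] need not be differentiable: the difference quotients of [u + v] and [u]
   differ by those of [v], which tend to 0, so both [lim]s are chosen among the
   same limit points. *)
Lemma derive1D_flat (u v : R -> R) x : derivable v x 1 -> derive1 v x = 0 ->
  derive1 (fun y => u y + v y) x = derive1 u x.
Proof.
move=> dv v0.
have qv : ((fun t : R => t^-1 *: (v (t + x) - v x)) @ 0^' --> (0:R))%classic.
  have cv : ((fun t : R => t^-1 *: ((v \o shift x) (t *: 1) - v x)) @ 0^' --> 'D_1 v x)%classic := dv.
  rewrite -derive1E v0 in cv.
  rewrite (_ : (fun t => _) = fun t => t^-1 *: ((v \o shift x) (t *: 1) - v x)) //.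
  by apply: funext => t; rewrite /= -[t *: 1]/(t * 1) mulr1.
rewrite /derive1 /lim /lim_in; congr (get _).
apply: funext => l; apply: propext; split => ql.
- have -> : (fun t : R => t^-1 *: (u (t + x) - u x)) =
     (fun t => t^-1 *: ((u (t + x) + v (t + x)) - (u x + v x)) - t^-1 *: (v (t + x) - v x)).
    by apply: funext => t; rewrite -scalerBr; congr (_ *: _); ring.
  by rewrite -[l]subr0; apply: cvgB.
- have -> : (fun t : R => t^-1 *: ((u (t + x) + v (t + x)) - (u x + v x))) =
     (fun t => t^-1 *: (u (t + x) - u x) + t^-1 *: (v (t + x) - v x)).
    by apply: funext => t; rewrite -scalerDr; congr (_ *: _); ring.
  by rewrite -[l]addr0; apply: cvgD.
Qed.

Definition cderivable f x :=
  derivable (fun y => complex.Re (f y)) x 1 /\ derivable (fun y => complex.Im (f y)) x 1.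

Lemma cderivableD f h x :
  cderivable f x -> cderivable h x -> cderivable (fun y => f y + h y) x.
Proof.
move=> [/derivableP ? /derivableP ?] [/derivableP ? /derivableP ?].
by rewrite /cderivable (funext (fun y => ReD (f y) (h y))) (funext (fun y => ImD (f y) (h y))).
Qed.

Lemma cderivD f h x : cderivable f x -> cderivable h x ->
  cderiv (fun y => f y + h y) x = cderiv f x + cderiv h x.
Proof.
move=> [/derivableP ? /derivableP ?] [/derivableP ? /derivableP ?].
rewrite /cderiv (funext (fun y => ReD (f y) (h y))) (funext (fun y => ImD (f y) (h y))).
by rewrite !derive1E; congr Complex; rewrite derive_val.
Qed.

Lemma cderivableMl (c : R[i]) f x : cderivable f x -> cderivable (fun y => c * f y) x.
Proof.
move=> [/derivableP ? /derivableP ?].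
by rewrite /cderivable (funext (fun y => ReM c (f y))) (funext (fun y => ImM c (f y))).
Qed.

Lemma cderivMl (c : R[i]) f x : cderivable f x ->
  cderiv (fun y => c * f y) x = c * cderiv f x.
Proof.
move=> [/derivableP ? /derivableP ?].
rewrite /cderiv (funext (fun y => ReM c (f y))) (funext (fun y => ImM c (f y))).
by rewrite !derive1E; case: c => a b; congr Complex; rewrite derive_val.
Qed.

Lemma cderivable_sum (I : Type) (r : seq I) (F : I -> R -> R[i]) x :
  (forall k, cderivable (F k) x) -> cderivable (fun y => \sum_(k <- r) F k y) x.
Proof.
move=> dF; elim: r => [|k r IH].
  by rewrite (_ : (fun y => _) = fun=> 0) //; apply: funext => y; rewrite big_nil.
rewrite (_ : (fun y => _) = fun y => F k y + \sum_(j <- r) F j y).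
  exact: cderivableD.
by apply: funext => y; rewrite big_cons.
Qed.

Lemma cderiv_sum (I : Type) (r : seq I) (F : I -> R -> R[i]) x :
  (forall k, cderivable (F k) x) ->
  cderiv (fun y => \sum_(k <- r) F k y) x = \sum_(k <- r) cderiv (F k) x.
Proof.
move=> dF; elim: r => [|k r IH].
  rewrite big_nil (_ : (fun y => _) = fun=> 0); last by apply: funext => y; rewrite big_nil.
  by rewrite /cderiv !derive1E !derive_val.
rewrite big_cons (_ : (fun y => _) = fun y => F k y + \sum_(j <- r) F j y).
  by rewrite cderivD ?IH //; exact: cderivable_sum.
by apply: funext => y; rewrite big_cons.
Qed.

Lemma cderivable_lincomb (I : Type) (r : seq I) (c : I -> R[i]) (F : I -> R -> R[i]) x :
  (forall k, cderivable (F k) x) -> cderivable (fun y => \sum_(k <- r) c k * F k y) x.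
Proof. by move=> dF; apply: cderivable_sum => k; exact: cderivableMl. Qed.

Lemma cderiv_lincomb (I : Type) (r : seq I) (c : I -> R[i]) (F : I -> R -> R[i]) x :
  (forall k, cderivable (F k) x) ->
  cderiv (fun y => \sum_(k <- r) c k * F k y) x = \sum_(k <- r) c k * cderiv (F k) x.
Proof.
move=> dF; rewrite cderiv_sum => [|k]; last exact: cderivableMl.
by apply: eq_bigr => k _; exact: cderivMl.
Qed.

Lemma Re_expjM t (z : R[i]) :
  complex.Re (expj t * z) = cos t * complex.Re z - sin t * complex.Im z.
Proof. by case: z. Qed.

Lemma Im_expjM t (z : R[i]) :
  complex.Im (expj t * z) = cos t * complex.Im z + sin t * complex.Re z.
Proof. by case: z => a b; rewrite /= addrC. Qed.

Lemma cderivable_expjM (th : R -> R) (z : R[i]) x :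
  derivable th x 1 -> cderivable (fun y => expj (th y) * z) x.
Proof.
move=> /derivableP ?.
by rewrite /cderivable (funext (fun y => Re_expjM _ z)) (funext (fun y => Im_expjM _ z)).
Qed.

Lemma cderivDr_flat f h x : cderivable h x -> cderiv h x = 0 ->
  cderiv (fun y => f y + h y) x = cderiv f x.
Proof.
move=> [dR dI] [hR hI].
rewrite /cderiv (funext (fun y => ReD (f y) (h y))) (funext (fun y => ImD (f y) (h y))).
by rewrite !derive1D_flat.
Qed.
End ComplexDerivative.

Section ConjugateTranspose.
Variable R : realType.

Lemma hadjK m n (A : 'M[R[i]]_(m, n)) : hadj (hadj A) = A.
Proof. by apply/matrixP => i j; rewrite !mxE conjcK. Qed.

Lemma hadjM m n p (A : 'M[R[i]]_(m, n)) (B : 'M[R[i]]_(n, p)) :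
  hadj (A *m B) = hadj B *m hadj A.
Proof.
apply/matrixP => i j; rewrite !mxE rmorph_sum.
by apply: eq_bigr => k _; rewrite !mxE rmorphM mulrC.
Qed.

Lemma hadj0 m n : hadj (0 : 'M[R[i]]_(m, n)) = 0.
Proof. by apply/matrixP => i j; rewrite !mxE conjc0. Qed.

Lemma mul_hadj_row_eq0 n (y : 'rV[R[i]]_n) : y *m hadj y = 0 -> y = 0.
Proof.
move=> /matrixP /(_ 0 0); rewrite !mxE => y0.
have yy_ge0 j : true -> 0 <= y 0 j * hadj y j 0 by rewrite !mxE => _; exact: mulcJ_ge0.
apply/rowP => j; have /eqP := psumr_eq0P yy_ge0 y0 (i := j) isT.
by rewrite !mxE mulf_eq0 conjc_eq0 orbb => /eqP.
Qed.

Lemma unitmx_hadj_mul m n (B : 'M[R[i]]_(m, n)) : \rank B = n -> hadj B *m B \in unitmx.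
Proof.
move=> rB; rewrite -row_free_unit -kermx_eq0; apply/eqP/row_matrixP => i; rewrite row0.
set x := row i _.
have xBB : x *m (hadj B *m B) = 0 by rewrite -row_mul mulmx_ker row0.
have xB0 : x *m hadj B = 0.
  by apply: mul_hadj_row_eq0; rewrite hadjM hadjK mulmxA -(mulmxA x) xBB mul0mx.
have Bx0 : B *m hadj x = 0 by rewrite -[B]hadjK -hadjM xB0 hadj0.
have rfB : row_free B^T by rewrite /row_free mxrank_tr rB.
suff hx0 : hadj x = 0 by rewrite -[x]hadjK hx0 hadj0.
apply: trmx_inj; apply: (row_free_inj rfB).
by rewrite trmx0 mul0mx -trmx_mul Bx0 trmx0.
Qed.

Lemma hadj_mul_eq_of_proj m n (B : 'M[R[i]]_(m, n)) (w1 w2 : 'cV[R[i]]_m) :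
  \rank B = n ->
  B *m invmx (hadj B *m B) *m hadj B *m w1 = B *m invmx (hadj B *m B) *m hadj B *m w2 ->
  hadj B *m w1 = hadj B *m w2.
Proof.
move=> /unitmx_hadj_mul BB E.
have K : hadj B *m (B *m invmx (hadj B *m B) *m hadj B) = hadj B.
  by rewrite !mulmxA mulmxV // mul1mx.
by rewrite -{1}K -mulmxA E mulmxA K.
Qed.
End ConjugateTranspose.

Section SteeringPhase.
Variable R : realType.

Lemma mulmx_tvecE n (P : 'M[R]_(3, n)) az el k :
  (P^T *m tvec az el) k 0 =
  P 0 k * (cos az * cos el) + P 1 k * (sin az * cos el) + P 2%:R k * sin el.
Proof.
rewrite !mxE !big_ord_recr big_ord0 /= !mxE /= add0r.
by congr (P _ k * _ + P _ k * _ + P _ k * _); apply/val_inj.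
Qed.

Lemma derivable_phase_az n (P : 'M[R]_(3, n)) el k x :
  derivable (fun y => (P^T *m tvec y el) k 0) x 1.
Proof. by rewrite (funext (fun y => mulmx_tvecE P y el k)). Qed.

Lemma derivable_phase_el n (P : 'M[R]_(3, n)) az k x :
  derivable (fun y => (P^T *m tvec az y) k 0) x 1.
Proof. by rewrite (funext (fun y => mulmx_tvecE P az y k)). Qed.
End SteeringPhase.

Section Model.
Variable R : realType.
Variable S : sysParams R.
Implicit Types (g : 'cV[R]_11) (w : 'cV[R[i]]_(Nr S)).

Lemma gam_updc g (k : 'I_11) x j :
  gam (updc g k x) j = if @inord 10 j == k then x else gam g j.
Proof. by rewrite /gam /updc mxE. Qed.

Lemma b_rE az el k : b_r S az el k 0 =
  expj (- (2 * pi * fc S / cl S) * ((Pr S)^T *m tvec az el) k 0) *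
  a_r S (ph_sr_az S) (ph_sr_el S) k 0.
Proof. by rewrite !mxE. Qed.

Lemma cderivable_b_r_az el k x : cderivable (fun y => b_r S y el k 0) x.
Proof.
rewrite (funext (fun y => b_rE y el k)); apply: cderivable_expjM.
by have := derivableP (@derivable_phase_az R _ (Pr S) el k x).
Qed.

Lemma cderivable_b_r_el az k x : cderivable (fun y => b_r S az y k 0) x.
Proof.
rewrite (funext (fun y => b_rE az y k)); apply: cderivable_expjM.
by have := derivableP (@derivable_phase_el R _ (Pr S) az k x).
Qed.

Lemma ris_responseE az el w :
  ((a_r S az el)^T *m diag_mx w^T *m a_r S (ph_sr_az S) (ph_sr_el S)) 0 0 =
  \sum_k w k 0 * b_r S az el k 0.
Proof. by rewrite mxE; apply: eq_bigr => k _; rewrite mul_mx_diag !mxE; ring. Qed.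

Definition ris_gain (g : 'cV[R]_11) (m n : nat) : R[i] :=
  (Num.sqrt (Pow S))%:C%C * (Complex (gam g 9) (gam g 10) *
    expj (2 * pi * (m%:R * Tper S * nu_sr S - n%:R * Df S * gam g 3))) *
  ((a_s S (th_sr_az S) (th_sr_el S))^T *m prec S m) 0 0 * pilot S m n.

Lemma mu_omegaD g w1 w2 m n :
  mu S g w1 m n = mu S g w2 m n +
    ris_gain g m n * \sum_k (w1 k 0 - w2 k 0) * b_r S (gam g 4) (gam g 5) k 0.
Proof.
under [X in _ * X]eq_bigr do rewrite mulrBl.
by rewrite sumrB /mu /ris_gain /= !ris_responseE; ring.
Qed.

Lemma gam_updc_inord g i j x : (i < 11)%N -> (j < 11)%N ->
  gam (updc g (inord i) x) j = if j == i then x else gam g j.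
Proof.
move=> lti ltj; rewrite gam_updc; congr (if _ then _ else _).
apply/eqP/eqP => [E|->//].
by have := congr1 val E; rewrite /= !inordK.
Qed.

Lemma ris_gain_updc g i x m n : (i == 4)%N || (i == 5)%N ->
  ris_gain (updc g (inord i) x) m n = ris_gain g m n.
Proof. by case/orP => /eqP->; rewrite /ris_gain !gam_updc_inord. Qed.

Lemma hadj_Bmat_mulE g w (j : 'I_3) :
  (hadj (Bmat S g) *m w) j 0 = \sum_k w k 0 * nth 0
    [:: b_r S (gam g 4) (gam g 5) k 0;
        cderiv (fun y => b_r S y (gam g 5) k 0) (gam g 4);
        cderiv (fun y => b_r S (gam g 4) y k 0) (gam g 5)] j.
Proof. by rewrite mxE; apply: eq_bigr => k _; rewrite !mxE conjcK mulrC. Qed.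

Lemma Bmat_orthogonal g w1 w2 (j : 'I_3) :
  hadj (Bmat S g) *m w1 = hadj (Bmat S g) *m w2 ->
  \sum_k (w1 k 0 - w2 k 0) * nth 0
    [:: b_r S (gam g 4) (gam g 5) k 0;
        cderiv (fun y => b_r S y (gam g 5) k 0) (gam g 4);
        cderiv (fun y => b_r S (gam g 4) y k 0) (gam g 5)] j = 0.
Proof.
move=> /(congr1 (fun M : 'M[R[i]]_(3, 1) => M j 0)); rewrite !hadj_Bmat_mulE => E.
by under eq_bigr do rewrite mulrBl; rewrite sumrB E subrr.
Qed.

Lemma dmu_eq_of_flat g w1 w2 m n k (beta : R -> R[i]) :
  (forall x, mu S (updc g k x) w1 m n = mu S (updc g k x) w2 m n + ris_gain g m n * beta x) ->
  cderivable beta (g k 0) -> cderiv beta (g k 0) = 0 ->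
  dmu S g w1 m n k = dmu S g w2 m n k.
Proof.
move=> E dbeta beta0.
have dh := cderivableMl (ris_gain g m n) dbeta.
have h0 : cderiv (fun y => ris_gain g m n * beta y) (g k 0) = 0.
  by rewrite (cderivMl _ dbeta) beta0 mulr0.
by rewrite /dmu (funext E) (cderivDr_flat _ dh h0).
Qed.

Lemma dmu_eq_of_hadj_Bmat g w1 w2 m n k :
  hadj (Bmat S g) *m w1 = hadj (Bmat S g) *m w2 ->
  dmu S g w1 m n k = dmu S g w2 m n k.
Proof.
move=> Bw; set d := fun i => w1 i 0 - w2 i 0.
have [->|k4] := eqVneq k (inord 4).
  apply: (dmu_eq_of_flat (beta := fun y => \sum_i d i * b_r S y (gam g 5) i 0)).
  - by move=> x; rewrite (mu_omegaD _ w1 w2) ris_gain_updc // !gam_updc_inord.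
  - by apply: cderivable_lincomb => i; exact: cderivable_b_r_az.
  by rewrite cderiv_lincomb => [|i]; [exact: (Bmat_orthogonal 1 Bw) | exact: cderivable_b_r_az].
have [->|k5] := eqVneq k (inord 5).
  apply: (dmu_eq_of_flat (beta := fun y => \sum_i d i * b_r S (gam g 4) y i 0)).
  - by move=> x; rewrite (mu_omegaD _ w1 w2) ris_gain_updc // !gam_updc_inord.
  - by apply: cderivable_lincomb => i; exact: cderivable_b_r_el.
  by rewrite cderiv_lincomb => [|i]; [exact: (Bmat_orthogonal 2 Bw) | exact: cderivable_b_r_el].
rewrite /dmu (_ : (fun x => mu S (updc g k x) w1 m n) = fun x => mu S (updc g k x) w2 m n) //.
apply: funext => x.
rewrite (mu_omegaD _ w1 w2) !gam_updc eq_sym (negbTE k4) eq_sym (negbTE k5).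
by rewrite (Bmat_orthogonal 0 Bw) mulr0 addr0.
Qed.

Lemma Jgam_eq_of_hadj_Bmat g w1 w2 :
  hadj (Bmat S g) *m w1 = hadj (Bmat S g) *m w2 -> Jgam S g w1 = Jgam S g w2.
Proof.
move=> Bw; rewrite /Jgam; suff -> : dmu S g w1 = dmu S g w2 by [].
by do 3 apply: funext => ?; exact: dmu_eq_of_hadj_Bmat.
Qed.
End Model.

Theorem mainTheorem1 (R : realType) (S : sysParams R) :
  0 < fc S -> 0 < cl S -> 0 < Pow S -> 0 < sigma2 S ->
  (forall (g : 'cV[R]_11) (w1 w2 : 'cV[R[i]]_(Nr S)),
      hadj (Bmat S g) *m w1 = hadj (Bmat S g) *m w2 ->
      Jgam S g w1 = Jgam S g w2) /\
  (forall (g : 'cV[R]_11) (w1 w2 : 'cV[R[i]]_(Nr S)),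
      \rank (Bmat S g) = 3%N ->
      PiB S g *m w1 = PiB S g *m w2 ->
      Jgam S g w1 = Jgam S g w2) /\
  (forall (e : 'cV[R]_8) (w1 w2 : 'cV[R[i]]_(Nr S)),
      \rank (Bmat S (gamma_of_eta S e)) = 3%N ->
      PiB S (gamma_of_eta S e) *m w1 = PiB S (gamma_of_eta S e) *m w2 ->
      Jgam S (gamma_of_eta S e) w1 = Jgam S (gamma_of_eta S e) w2 /\
      Jeta S e w1 = Jeta S e w2).
Proof.
move=> _ _ _ _.
have Jgam_eq_of_PiB g w1 w2 : \rank (Bmat S g) = 3%N ->
    PiB S g *m w1 = PiB S g *m w2 -> Jgam S g w1 = Jgam S g w2.
  by move=> rB /(hadj_mul_eq_of_proj rB) /Jgam_eq_of_hadj_Bmat.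
split; first by move=> g w1 w2 /Jgam_eq_of_hadj_Bmat.
split; first exact: Jgam_eq_of_PiB.
move=> e w1 w2 rB E; have J := Jgam_eq_of_PiB _ _ _ rB E.
by split; last rewrite /Jeta J.
Qed.
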